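(* Let $n\ge3$ and let $R,V_1,\ldots,V_{n-1}\in H^1(K_n;\mathbb{Z}_2)$ be classes giving an algebra isomorphism $H^*(K_n;\mathbb{Z}_2)\cong\mathbb{Z}_2[R,V_1,\ldots,V_{n-1}]/(R^2,V_i^2+RV_i)$. For $x\in H^1(K_n;\mathbb{Z}_2)$ write $\overline{x}=x\otimes1+1\otimes x\in H^1(K_n\times K_n;\mathbb{Z}_2)$. Then in $H^*(K_n\times K_n;\mathbb{Z}_2)$, $$\overline{V}_1^{\,3}\,\overline{V}_2^{\,2}\,\overline{V}_3\cdots\overline{V}_{n-1}\ne0,$$ but every product of at least $n+3$ factors, each of the form $\overline{V}_i$ or $\overline{R}$, is $0$.
   Context: $K_n=(S^1)^n/\bigl((z_1,\ldots,z_{n-1},z_n)\sim(\overline{z}_1,\ldots,\overline{z}_{n-1},-z_n)\bigr)$, where $S^1\subset\mathbb{C}$ is the unit circle and $\overline{z}$ is complex conjugation. $H^*(K_n\times K_n;\mathbb{Z}_2)$ is identified with $H^*(K_n;\mathbb{Z}_2)\otimes H^*(K_n;\mathbb{Z}_2)$ via the Künneth isomorphism. *)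

From HB Require Import structures.
From mathcomp Require Import all_boot all_order all_algebra.
Set Implicit Arguments. Unset Strict Implicit. Unset Printing Implicit Defensive.
Import GRing.Theory.
Local Open Scope ring_scope.

(* Concrete model of  A_n := Z_2[R,V_1,...,V_{n-1}]/(R^2, V_i^2 + R V_i)
   (which is H^*(K_n;Z_2) by hypothesis) and of its tensor square A_n (x) A_n
   (which is H^*(K_n x K_n;Z_2) by Kunneth).

   A_n has the Z_2-basis of monomials  R^a * prod_{i in S} V_i,
   a in {0,1}, S a subset of {V_1,...,V_{n-1}}; generator V_i is indexed by
   the ordinal  i-1 : 'I_(n-1).  Since V_i^2 = R V_i and R^2 = 0, the product of
   basis monomials (a,S),(b,T) is R^(a+b+|S/\T|) prod_{S\/T} V, which is the
   basis monomial (true, S :|: T) or (false, S :|: T) if that exponent is <= 1,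
   and 0 otherwise. *)

Definition monA (n : nat) : finType := (bool * {set 'I_(n.-1)})%type.

Definition mulmonA (n : nat) (p q : monA n) : option (monA n) :=
  let k := (p.1 : nat) + (q.1 : nat) + #|p.2 :&: q.2| in
  if (k <= 1)%N then Some (k == 1%N, p.2 :|: q.2) else None.

(* Basis monomials of A_n (x) A_n: x (x) y with x, y basis monomials of A_n.
   (Coefficients are in Z_2, so no Koszul signs.) *)
Definition monT (n : nat) : finType := (monA n * monA n)%type.

Definition mulmonT (n : nat) (p q : monT n) : option (monT n) :=
  match mulmonA p.1 q.1, mulmonA p.2 q.2 with
  | Some r1, Some r2 => Some (r1, r2)
  | _, _ => None
  end.

Definition elT (n : nat) := {ffun monT n -> 'F_2}.

Definition basisT (n : nat) (m : monT n) : elT n := [ffun m' => (m' == m)%:R].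

Definition mulT (n : nat) (x y : elT n) : elT n :=
  [ffun m => \sum_(p : monT n) \sum_(q : monT n)
               (if mulmonT p q == Some m then x p * y q else 0)].

Definition oneT (n : nat) : elT n := basisT ((false, set0), (false, set0)).

Definition prodT (n : nat) (s : seq (elT n)) : elT n := foldr (@mulT n) (oneT n) s.

Definition R_l (n : nat) : elT n := basisT ((true, set0), (false, set0)).
Definition R_r (n : nat) : elT n := basisT ((false, set0), (true, set0)).
Definition V_l (n : nat) (j : 'I_(n.-1)) : elT n := basisT ((false, [set j]), (false, set0)).
Definition V_r (n : nat) (j : 'I_(n.-1)) : elT n := basisT ((false, set0), (false, [set j])).

Definition Rbar (n : nat) : elT n := R_l n + R_r n.
(* \overline{V}_{j+1} for j : 'I_(n-1) *)
Definition Vbar (n : nat) (j : 'I_(n.-1)) : elT n := V_l j + V_r j.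
(* \overline{V}_i with the paper's 1-based index i (1 <= i <= n-1); 0 otherwise *)
Definition Vb (n : nat) (i : nat) : elT n := \sum_(j : 'I_(n.-1) | j.+1 == i) Vbar j.

Definition factor (n : nat) (o : option 'I_(n.-1)) : elT n :=
  if o is Some j then Vbar j else Rbar n.

(* A tensor monomial R^a V_S (x) R^b V_T has R-degree a + b <= 2, and a
   nonzero product of monomials has at least the sum of their R-degrees.  Rbar and
   Vbar_i^2 = R V_i (x) 1 + 1 (x) R V_i have R-degree >= 1, so any product
   containing three such blocks vanishes.  Together with Rbar^2 = 0,
   Vbar_i^4 = 0 and Vbar_i^3 Vbar_k^3 = 0 for i <> k, counting exponents
   leaves room for at most n + 2 factors.
   Conversely Vbar_1^3 Vbar_2^2 = R V_1 (x) R V_1 V_2 + R V_1 V_2 (x) R V_1.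
   On monomials whose right factor is R V_1 V_2, multiplication by Vbar_j with
   j >= 3 acts through its left summand only, so in the full product the
   coefficient of R V_1 V_3 ... V_{n-1} (x) R V_1 V_2 stays equal to 1. *)

From HB Require Import structures.
From mathcomp Require Import all_boot all_order all_algebra.
From mathcomp Require Import zify.
Set Implicit Arguments. Unset Strict Implicit. Unset Printing Implicit Defensive.
Import GRing.Theory.
Local Open Scope ring_scope.

(* A commutative monoid with zero, the zero being encoded as [None];
   [conv] is the product of its contracted monoid algebra over [R]. *)
Section ContractedMonoidAlgebra.
Variables (M : finType) (R : comNzRingType) (op : M -> M -> option M) (e : M).
Hypothesis opC : forall p q, op p q = op q p.
Hypothesis opA : forall p q r, obind (op^~ r) (op p q) = obind (op p) (op q r).
Hypothesis op1 : forall p, op e p = Some p.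

Definition conv (x y : {ffun M -> R}) : {ffun M -> R} :=
  [ffun m => \sum_p \sum_q (if op p q == Some m then x p * y q else 0)].

Definition unit_vec (p : M) : {ffun M -> R} := [ffun m => (m == p)%:R].

Lemma sum_indicator_mul (p : M) (g : M -> R) : \sum_r (r == p)%:R * g r = g p.
Proof.
rewrite (bigD1 p) //= eqxx mul1r big1 ?addr0 // => r /negbTE->.
by rewrite mul0r.
Qed.

Lemma sum_indicator_Some_mul (o : option M) (g : M -> R) :
  \sum_r (o == Some r)%:R * g r = oapp g 0 o.
Proof.
case: o => [p|] /=; last by rewrite big1 // => r _; rewrite mul0r.
by under eq_bigr do rewrite (inj_eq Some_inj) eq_sym; rewrite sum_indicator_mul.
Qed.

Lemma convE x y m : conv x y m = \sum_p \sum_q (op p q == Some m)%:R * (x p * y q).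
Proof.
by rewrite ffunE; do 2!apply: eq_bigr => ? _; case: eqP; rewrite ?mul1r ?mul0r.
Qed.

Lemma convC : commutative conv.
Proof.
move=> x y; apply/ffunP => m; rewrite !convE exchange_big /=.
by do 2!apply: eq_bigr => ? _; rewrite opC [x _ * _]mulrC.
Qed.

Lemma convDl : left_distributive conv +%R.
Proof.
move=> x y z; apply/ffunP => m; rewrite [RHS]ffunE !convE -big_split /=.
apply: eq_bigr => p _; rewrite -big_split; apply: eq_bigr => q _.
by rewrite ffunE mulrDl mulrDr.
Qed.

Lemma conv_convlE x y z m : conv (conv x y) z m =
  \sum_a \sum_b \sum_c (obind (op^~ c) (op a b) == Some m)%:R * (x a * y b * z c).
Proof.
rewrite convE; under eq_bigr do under eq_bigr do
  (rewrite convE mulr_suml mulr_sumr; under eq_bigr do rewrite mulr_suml mulr_sumr).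
rewrite exchange_big; under eq_bigr do rewrite exchange_big; rewrite exchange_big.
apply: eq_bigr => a _; under eq_bigr do rewrite exchange_big; rewrite exchange_big.
apply: eq_bigr => b _; apply: eq_bigr => c _.
transitivity (\sum_r (op a b == Some r)%:R * ((op r c == Some m)%:R * (x a * y b * z c))).
  by apply: eq_bigr => r _; rewrite -!mulrA mulrCA.
by rewrite sum_indicator_Some_mul; case: (op a b) => //=; rewrite mul0r.
Qed.

Lemma convA : associative conv.
Proof.
move=> x y z; apply/ffunP => m; rewrite (convC x) !conv_convlE; symmetry.
rewrite exchange_big; apply: eq_bigr => b _; rewrite exchange_big; apply: eq_bigr => c _.
apply: eq_bigr => a _; rewrite opA; congr (_ * _); last by rewrite [RHS]mulrC mulrA.
by case: (op b c) => //= r; rewrite opC.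
Qed.

Lemma conv_unit_vec p q : conv (unit_vec p) (unit_vec q) = oapp unit_vec 0 (op p q).
Proof.
apply/ffunP => m; rewrite convE.
under eq_bigr do under eq_bigr do rewrite !ffunE mulrCA.
under eq_bigr do rewrite -mulr_sumr.
rewrite sum_indicator_mul; under eq_bigr do rewrite mulrC; rewrite sum_indicator_mul.
by case: (op p q) => [r|] /=; rewrite !ffunE // eq_sym.
Qed.

Lemma conv1 : left_id (unit_vec e) conv.
Proof.
move=> x; apply/ffunP => m; rewrite convE.
under eq_bigr do under eq_bigr do rewrite ffunE mulrCA.
under eq_bigr do rewrite -mulr_sumr.
rewrite sum_indicator_mul; under eq_bigr do rewrite op1 (inj_eq Some_inj).
exact: sum_indicator_mul.
Qed.

Lemma unit_vec_neq0 p : unit_vec p != 0.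
Proof. by apply/eqP => /ffunP/(_ p)/eqP; rewrite !ffunE eqxx oner_eq0. Qed.

End ContractedMonoidAlgebra.

Section Multiplicities.
Variables (R : comPzSemiRingType) (T : finType).
Implicit Types (F : T -> R) (e : T -> nat).

Lemma prodr_count F (s : seq T) : \prod_(t <- s) F t = \prod_t F t ^+ count_mem t s.
Proof.
elim: s => [|u s IH]; first by rewrite big_nil big1 // => t _; rewrite expr0.
rewrite big_cons IH; symmetry; under eq_bigr do rewrite /= exprD.
rewrite big_split /= (bigD1 u) //= eqxx expr1 [X in F u * X * _]big1 ?mulr1 // => t.
by rewrite eq_sym => /negbTE ->.
Qed.

Lemma expr_eq0_le (x : R) a b : x ^+ a = 0 -> (a <= b)%N -> x ^+ b = 0.
Proof. by move=> xa ab; rewrite -(subnKC ab) exprD xa mul0r. Qed.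

Lemma prod_exp_eq0 F e t : F t ^+ e t = 0 -> \prod_u F u ^+ e u = 0.
Proof. by move=> Ft0; rewrite (bigD1 t) //= Ft0 mul0r. Qed.

Lemma prod_exp_eq0_pair F e t1 t2 : t1 != t2 ->
  F t1 ^+ e t1 * F t2 ^+ e t2 = 0 -> \prod_u F u ^+ e u = 0.
Proof.
move=> t12 F0; rewrite (bigD1 t1) // (bigD1 t2) 1?eq_sym //=.
by rewrite mulrA F0 mul0r.
Qed.

End Multiplicities.

Lemma size_count (T : finType) (s : seq T) : size s = (\sum_t count_mem t s)%N.
Proof.
elim: s => [|u s IH] /=; first by rewrite big1.
rewrite IH big_split /= -add1n; congr (_ + _)%N.
by rewrite (bigD1 u) //= eqxx big1 // => t; rewrite eq_sym => /negbTE ->.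
Qed.

Lemma sum_option (T : finType) (F : option T -> nat) :
  (\sum_o F o = F None + \sum_t F (Some t))%N.
Proof.
rewrite (bigD1 None) //=; congr (_ + _)%N.
by rewrite (reindex_omap Some id) => [|[]//]; apply: eq_bigl => t; rewrite /= eqxx.
Qed.

Lemma sum_nat_of_bool (T : finType) (P : pred T) : (\sum_t (P t : nat) = #|P|)%N.
Proof.
rewrite -sum1_card [in RHS]big_mkcond; apply: eq_bigr => t _.
by rewrite unfold_in; case: (P t).
Qed.

Lemma sum_exponents_le (T : finType) (e : option T -> nat) :
    (e None <= 1)%N -> (forall t, e (Some t) <= 3)%N ->
    (\sum_t (3 <= e (Some t)) <= 1)%N ->
    ((0 < e None) + \sum_t (2 <= e (Some t)) <= 2)%N ->
  (\sum_o e o <= #|T| + 3)%N.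
Proof.
move=> eN eS C3 C2; rewrite sum_option.
have : (\sum_t e (Some t) <= \sum_t (1 + (2 <= e (Some t)) + (3 <= e (Some t))))%N.
  by apply: leq_sum => t _; move: (eS t); case: (e (Some t)) => [|[|[|[|]]]].
rewrite !big_split /= (_ : \sum_t 1 = #|T|)%N ?sum1_card //.
by move: eN C2; case: (e None) => [|[|]] //=; lia.
Qed.

Section Monomials.
Variable n : nat.
Implicit Types (a b c : bool) (S T U : {set 'I_(n.-1)}).

Definition rmon (k : nat) S : option (monA n) :=
  if (k <= 1)%N then Some (k == 1%N, S) else None.

Lemma mulmonAE a S b T : mulmonA (a, S) (b, T) = rmon (a + b + #|S :&: T|) (S :|: T).
Proof. by []. Qed.

Lemma rmon_Some k S c U : rmon k S = Some (c, U) -> k = c /\ U = S.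
Proof. by rewrite /rmon; case: leqP => // k_le1 [<- <-]; case: k k_le1 => [|[]]. Qed.

Lemma mulmonA_Some a S b T c U : mulmonA (a, S) (b, T) = Some (c, U) ->
  (a + b + #|S :&: T|)%N = c /\ U = S :|: T.
Proof. exact: rmon_Some. Qed.

Lemma mulmonA_Rexp (p q r : monA n) : mulmonA p q = Some r -> (p.1 + q.1 <= r.1)%N.
Proof. by case: p q r => a S [b T] [c U] /mulmonA_Some [<- _]; rewrite /= leq_addr. Qed.

Lemma mulmonA_comm (p q : monA n) : mulmonA p q = mulmonA q p.
Proof. by case: p q => a S [b T]; rewrite !mulmonAE (addnC a) setIC setUC. Qed.

Lemma obind_rmon_mulmonA k S c U :
  obind ((@mulmonA n)^~ (c, U)) (rmon k S) = rmon (k + c + #|S :&: U|) (S :|: U).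
Proof.
rewrite /rmon; case: leqP => [k_le1 | k_gt1] /=; first by case: k k_le1 => [|[]].
by case: leqP => //; lia.
Qed.

Lemma obind_mulmonA_rmon a S k T :
  obind (@mulmonA n (a, S)) (rmon k T) = rmon (a + k + #|S :&: T|) (S :|: T).
Proof.
transitivity (obind ((@mulmonA n)^~ (a, S)) (rmon k T)).
  by case: (rmon k T) => //= p; rewrite mulmonA_comm.
by rewrite obind_rmon_mulmonA (addnC k) setIC setUC.
Qed.

Lemma cardsI_setU_assoc S T U :
  (#|S :&: T| + #|(S :|: T) :&: U| = #|T :&: U| + #|S :&: (T :|: U)|)%N.
Proof.
have := cardsUI (S :&: U) (T :&: U); have := cardsUI (S :&: T) (S :&: U).
have -> : S :&: U :&: (T :&: U) = S :&: T :&: (S :&: U).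
  by apply/setP => x; rewrite !inE; case: (x \in S); case: (x \in T); case: (x \in U).
rewrite -setIUl -setIUr; lia.
Qed.

Lemma mulmonA_assoc (p q r : monA n) :
  obind ((@mulmonA n)^~ r) (mulmonA p q) = obind (mulmonA p) (mulmonA q r).
Proof.
case: p q r => a S [b T] [c U].
rewrite !mulmonAE obind_rmon_mulmonA obind_mulmonA_rmon setUA.
by move: (cardsI_setU_assoc S T U) => eq_card; congr (rmon _ _); lia.
Qed.

Lemma mulmonA_disjoint a b S T : [disjoint S & T] ->
  mulmonA (a, S) (b, T) = if a && b then None else Some (a || b, S :|: T).
Proof.
move=> /disjoint_setI0 disST; rewrite mulmonAE disST cards0 addn0.
by case: a; case: b.
Qed.

Lemma mul1monA (p : monA n) : mulmonA (false, set0) p = Some p.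
Proof. by case: p => b T; rewrite mulmonAE set0I set0U cards0 addn0; case: b. Qed.

Lemma mulmonA1 (p : monA n) : mulmonA p (false, set0) = Some p.
Proof. by rewrite mulmonA_comm mul1monA. Qed.

Lemma mulmonA_RR S T : mulmonA (true, S) (true, T) = None.
Proof. by []. Qed.

Lemma mulmonA_set1 a b (i : 'I_(n.-1)) :
  mulmonA (a, [set i]) (b, [set i]) = if a || b then None else Some (true, [set i]).
Proof. by rewrite mulmonAE setIid setUid cards1; case: a; case: b. Qed.

Lemma mulmonA_set1D a b (i k : 'I_(n.-1)) : i != k ->
  mulmonA (a, [set i]) (b, [set k]) = if a && b then None else Some (a || b, [set i; k]).
Proof. by move=> ik; rewrite mulmonA_disjoint // disjoints1 in_set1. Qed.

Definition opair (o1 o2 : option (monA n)) : option (monT n) :=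
  if o1 is Some r1 then omap (pair r1) o2 else None.

Lemma mulmonTE (p1 p2 q1 q2 : monA n) :
  mulmonT (p1, p2) (q1, q2) = opair (mulmonA p1 q1) (mulmonA p2 q2).
Proof. by rewrite /mulmonT; case: (mulmonA _ _) => [?|]; case: (mulmonA _ _). Qed.

Lemma mulmonT_comm (p q : monT n) : mulmonT p q = mulmonT q p.
Proof.
by case: p q => [p1 p2] [q1 q2]; rewrite !mulmonTE (mulmonA_comm p1) (mulmonA_comm p2).
Qed.

Lemma obind_opair_mulmonT o1 o2 (r1 r2 : monA n) :
  obind ((@mulmonT n)^~ (r1, r2)) (opair o1 o2) =
  opair (obind ((@mulmonA n)^~ r1) o1) (obind ((@mulmonA n)^~ r2) o2).
Proof. by case: o1 o2 => [?|] [?|] //=; rewrite ?mulmonTE //; case: (mulmonA _ _). Qed.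

Lemma obind_mulmonT_opair (p1 p2 : monA n) o1 o2 :
  obind (mulmonT (p1, p2)) (opair o1 o2) =
  opair (obind (mulmonA p1) o1) (obind (mulmonA p2) o2).
Proof. by case: o1 o2 => [?|] [?|] //=; rewrite ?mulmonTE //; case: (mulmonA _ _). Qed.

Lemma mulmonT_assoc (p q r : monT n) :
  obind ((@mulmonT n)^~ r) (mulmonT p q) = obind (mulmonT p) (mulmonT q r).
Proof.
case: p q r => [p1 p2] [q1 q2] [r1 r2].
by rewrite !mulmonTE obind_opair_mulmonT obind_mulmonT_opair !mulmonA_assoc.
Qed.

Definition monT1 : monT n := ((false, set0), (false, set0)).

Lemma mul1monT (p : monT n) : mulmonT monT1 p = Some p.
Proof. by case: p => p1 p2; rewrite mulmonTE !mul1monA. Qed.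

End Monomials.

(* [elT n] already carries the pointwise ring structure of finite functions;
   the alias [cohT n] carries the cup product [mulT n] instead. *)
Definition cohT (n : nat) : Type := elT n.

HB.instance Definition _ n := GRing.Zmodule.on (cohT n).
HB.instance Definition _ n := GRing.Zmodule_isComNzRing.Build (cohT n)
  (@convA _ _ _ (@mulmonT_comm n) (@mulmonT_assoc n)) (@convC _ _ _ (@mulmonT_comm n))
  (@conv1 _ _ _ _ (@mul1monT n)) (@convDl _ _ _) (@unit_vec_neq0 _ _ (monT1 n)).

(* Locked: when comparing two distinct basis vectors, or [Vbar i] with
   [Vbar k], the unifier would otherwise unfold them into their
   finite-function graphs, which takes minutes. *)
HB.lock Definition mon n (m : monT n) : cohT n := basisT m.
Arguments mon {n} m.

HB.lock Definition vbar n (j : 'I_(n.-1)) : cohT n := Vbar j.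
Arguments vbar {n} j.

Lemma monE n (m : monT n) : mon m = basisT m.
Proof. by rewrite mon.unlock. Qed.

Section TensorSquare.
Variable n : nat.
Local Notation I := 'I_(n.-1).
Local Notation coh := (cohT n).
Local Notation mon := (@mon n).
Implicit Types (i j k : I) (x y : coh) (p q m : monT n).

Lemma mulmon p q : mon p * mon q = oapp mon 0 (mulmonT p q).
Proof.
rewrite !monE; apply: etrans (@conv_unit_vec _ _ (@mulmonT n) p q) _.
by case: (mulmonT p q) => //= r; rewrite monE.
Qed.

Lemma coef_mul x y m : (x * y) m = \sum_p \sum_q (mulmonT p q == Some m)%:R * (x p * y q).
Proof. exact: convE. Qed.

Lemma coef_mon p m : mon p m = (m == p)%:R.
Proof. by rewrite monE ffunE. Qed.

Lemma coef_mon_mul p x m : (mon p * x) m = \sum_q (mulmonT p q == Some m)%:R * x q.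
Proof.
rewrite coef_mul exchange_big; apply: eq_bigr => q _.
under eq_bigr do rewrite coef_mon mulrCA.
exact: sum_indicator_mul.
Qed.

Lemma cohT_pchar2 : 2 \in [pchar coh].
Proof.
rewrite inE /=; apply/eqP/ffunP => m.
by rewrite mulr2n ffunE (addrr_pchar2 (pchar_Fp (isT : prime 2))) ffunE.
Qed.

Lemma addrr_cohT x : x + x = 0.
Proof. exact: (addrr_pchar2 cohT_pchar2 x). Qed.

Lemma sqrrD_cohT x y : (x + y) ^+ 2 = x ^+ 2 + y ^+ 2.
Proof. by rewrite sqrrD mulr2n addrr_cohT addr0. Qed.

Lemma vbar_mon j :
  vbar j = mon ((false, [set j]), (false, set0)) + mon ((false, set0), (false, [set j])).
Proof. by rewrite vbar.unlock mon.unlock. Qed.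

Lemma Rbar_mon :
  (Rbar n : coh) = mon ((true, set0), (false, set0)) + mon ((false, set0), (true, set0)).
Proof. by rewrite !monE. Qed.

Ltac mon_expand := rewrite ?(mulrDl, mulrDr) !mulmon !mulmonTE.
Ltac mon_simpl :=
  rewrite ?(mul1monA, mulmonA1, mulmonA_RR, mulmonA_set1) /= ?(add0r, addr0, set0U, setU0).

Lemma Rbar_sqr : (Rbar n : coh) ^+ 2 = 0.
Proof. by rewrite Rbar_mon sqrrD_cohT !expr2; mon_expand; mon_simpl. Qed.

Lemma vbar_sqr j :
  vbar j ^+ 2 = mon ((true, [set j]), (false, set0)) + mon ((false, set0), (true, [set j])).
Proof. by rewrite vbar_mon sqrrD_cohT !expr2; mon_expand; mon_simpl. Qed.

Lemma vbar_cube j :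
  vbar j ^+ 3 = mon ((true, [set j]), (false, [set j])) + mon ((false, [set j]), (true, [set j])).
Proof. by rewrite exprS vbar_sqr vbar_mon; mon_expand; mon_simpl; rewrite addrC. Qed.

Lemma vbar_exp4 j : vbar j ^+ 4 = 0.
Proof. by rewrite exprS vbar_cube vbar_mon; mon_expand; mon_simpl; rewrite addrr_cohT. Qed.

Lemma vbar_cube_mul_cube i k : i != k -> vbar i ^+ 3 * vbar k ^+ 3 = 0.
Proof.
move=> ik; rewrite !vbar_cube; mon_expand; rewrite !(mulmonA_set1D _ _ ik); mon_simpl.
exact: addrr_cohT.
Qed.

Lemma vbar_cube_mul_sqr i k : i != k -> vbar i ^+ 3 * vbar k ^+ 2 =
  mon ((true, [set i]), (true, [set i; k])) + mon ((true, [set i; k]), (true, [set i])).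
Proof.
move=> ik; rewrite vbar_cube vbar_sqr; mon_expand.
by rewrite !(mulmonA_set1D _ _ ik); mon_simpl.
Qed.

Definition rdeg m : nat := m.1.1 + m.2.1.

Definition Rdeg_ge d x := forall m, x m != 0 -> (d <= rdeg m)%N.

Lemma mulmonT_rdeg p q m : mulmonT p q = Some m -> (rdeg p + rdeg q <= rdeg m)%N.
Proof.
case: p q => [p1 p2] [q1 q2]; rewrite mulmonTE /rdeg /=.
case E1: (mulmonA p1 q1) => [r1|] //; case E2: (mulmonA p2 q2) => [r2|] //= [<-] /=.
by rewrite addnACA leq_add ?(mulmonA_Rexp E1) ?(mulmonA_Rexp E2).
Qed.

Lemma Rdeg_ge0 x : Rdeg_ge 0 x.
Proof. by []. Qed.

Lemma Rdeg_ge_le d d' x : (d' <= d)%N -> Rdeg_ge d x -> Rdeg_ge d' x.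
Proof. by move=> le_d xd m /xd; apply: leq_trans. Qed.

Lemma Rdeg_ge_mon d m : (d <= rdeg m)%N -> Rdeg_ge d (mon m).
Proof. by move=> dm m'; rewrite coef_mon; case: (m' =P m) => [-> | _]; rewrite ?eqxx. Qed.

Lemma Rdeg_geD d x y : Rdeg_ge d x -> Rdeg_ge d y -> Rdeg_ge d (x + y).
Proof.
move=> xd yd m; rewrite ffunE.
have [/eqP -> | /xd //] := boolP (x m == 0); rewrite add0r; exact: yd.
Qed.

Lemma Rdeg_geM d1 d2 x y : Rdeg_ge d1 x -> Rdeg_ge d2 y -> Rdeg_ge (d1 + d2) (x * y).
Proof.
move=> xd1 yd2 m; apply: contraR; rewrite -ltnNge => m_low.
rewrite coef_mul big1 // => p _; rewrite big1 // => q _.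
case: eqP => [/mulmonT_rdeg pq_m | _]; last by rewrite mul0r.
have [/eqP -> | /xd1 p_deg] := boolP (x p == 0); first by rewrite mul0r mulr0.
have [/eqP -> | /yd2 q_deg] := boolP (y q == 0); first by rewrite !mulr0.
by move: m_low; rewrite ltnNge (leq_trans (leq_add p_deg q_deg) pq_m).
Qed.

Lemma Rdeg_ge_prod (J : finType) (w : J -> nat) (F : J -> coh) :
  (forall t, Rdeg_ge (w t) (F t)) -> Rdeg_ge (\sum_t w t) (\prod_t F t).
Proof.
move=> wF; apply: (big_rec2 (fun d x => Rdeg_ge d x)) => [|t d x _]; first exact: Rdeg_ge0.
exact: Rdeg_geM.
Qed.

Lemma Rdeg_ge3_eq0 x : Rdeg_ge 3 x -> x = 0.
Proof.
move=> x3; apply/ffunP => m; rewrite ffunE; apply/eqP; apply: contraT => /x3.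
by rewrite /rdeg; case: m => [[[] ?] [[] ?]].
Qed.

Lemma Rdeg_ge1_exp x (a e : nat) : Rdeg_ge 1 (x ^+ a) -> (a <= e)%N -> Rdeg_ge 1 (x ^+ e).
Proof.
move=> xa ae; rewrite -(subnKC ae) exprD.
by have := Rdeg_geM xa (@Rdeg_ge0 (x ^+ (e - a))); rewrite addn0.
Qed.

Lemma Rdeg_ge1_Rbar : Rdeg_ge 1 (Rbar n : coh).
Proof. by rewrite Rbar_mon; apply: Rdeg_geD; apply: Rdeg_ge_mon. Qed.

Lemma Rdeg_ge1_vbar_sqr j : Rdeg_ge 1 (vbar j ^+ 2).
Proof. by rewrite vbar_sqr; apply: Rdeg_geD; apply: Rdeg_ge_mon. Qed.

(* Over the monomials [u (x) R V_W], the element [x] is the single monomial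
   [R V_L (x) R V_W]. *)
Definition right_slice (W L : {set I}) x := forall u, x (u, (true, W)) = (u == (true, L))%:R.

Lemma right_slice_neq0 W L x : right_slice W L x -> x != 0.
Proof.
move=> /(_ (true, L)); rewrite eqxx => x1; apply/eqP => x0.
by move: x1; rewrite x0 ffunE => /eqP; rewrite eq_sym oner_eq0.
Qed.

Lemma right_slice_cube_sqr i k : i != k ->
  right_slice [set i; k] [set i] (vbar i ^+ 3 * vbar k ^+ 2).
Proof.
move=> ik u; rewrite vbar_cube_mul_sqr // ffunE !coef_mon !xpair_eqE !eqxx !andbT.
have W_neq : [set i; k] != [set i].
  by apply/eqP => /setP /(_ k); rewrite !inE eqxx orbT eq_sym (negbTE ik).
by rewrite (negbTE W_neq) !andbF addr0.
Qed.

Lemma right_slice_vbar (W L : {set I}) j x : j \notin W -> j \notin L ->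
  right_slice W L x -> right_slice W (j |: L) (vbar j * x).
Proof.
move=> jW jL xWL u; rewrite vbar_mon mulrDl ffunE !coef_mon_mul.
rewrite [X in _ + X]big1 ?addr0 => [|[q1 [c T]] _]; last first.
  rewrite mulmonTE mul1monA; case E: (mulmonA _ _) => [[d U]|] /=; last by rewrite mul0r.
  case: eqP => [[_ _ eUW] | _]; last by rewrite mul0r.
  by move/mulmonA_Some: E => [_ eU]; move: jW; rewrite -eUW eU in_setU in_set1 eqxx.
rewrite (bigD1 ((true, L), (true, W))) //= big1 ?addr0 => [|[q1 q2] ne_q]; last first.
  rewrite mulmonTE mul1monA; move: ne_q; have [-> | ne2 _] := eqVneq q2 (true, W).
    by rewrite xWL xpair_eqE eqxx andbT => /negbTE ->; rewrite mulr0.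
  case: (mulmonA _ _) => [r|] /=; last by rewrite mul0r.
  by rewrite (inj_eq Some_inj) xpair_eqE (negbTE ne2) andbF mul0r.
rewrite mulmonTE mul1monA mulmonA_disjoint ?disjoints1 //= xWL eqxx mulr1.
by rewrite (inj_eq Some_inj) xpair_eqE eqxx andbT eq_sym.
Qed.

Lemma right_slice_prod_vbar (W L : {set I}) (s : seq I) x :
    uniq s -> {in s, forall j, j \notin W} -> {in s, forall j, j \notin L} ->
  right_slice W L x -> right_slice W ([set j in s] :|: L) (\prod_(j <- s) vbar j * x).
Proof.
elim: s => [|j s IH] /=.
  by move=> _ _ _ xWL; rewrite big_nil mul1r (_ : [set j in [::]] = set0) ?set0U.
move=> /andP [js us] sW sL xWL; rewrite big_cons -mulrA.
have -> : [set i in j :: s] :|: L = j |: ([set i in s] :|: L).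
  by apply/setP => i; rewrite !inE orbA.
have sub_s i : i \in s -> i \in j :: s by rewrite inE => ->; rewrite orbT.
apply: right_slice_vbar; first exact/sW/mem_head.
  by rewrite in_setU inE negb_or js sL ?mem_head.
by apply: IH => // i /sub_s; [apply: sW | apply: sL].
Qed.

End TensorSquare.

Section ZeroDivisorCupLength.
Variable n : nat.
Local Notation I := 'I_(n.-1).
Local Notation coh := (cohT n).

Definition fac (o : option I) : coh := if o is Some j then vbar j else Rbar n.

Section Exponents.
Variable e : option I -> nat.
Local Notation prod_fac := (\prod_o fac o ^+ e o).

Lemma prod_fac_eq0_Rbar : (1 < e None)%N -> prod_fac = 0.
Proof. by move=> eN; apply: (prod_exp_eq0 (t := None)) (expr_eq0_le (Rbar_sqr n) eN). Qed.

Lemma prod_fac_eq0_vbar t : (3 < e (Some t))%N -> prod_fac = 0.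
Proof. by move=> et; apply: (prod_exp_eq0 (t := Some t)) (expr_eq0_le (vbar_exp4 t) et). Qed.

Lemma prod_fac_eq0_cubes : (1 < \sum_t (2 < e (Some t)))%N -> prod_fac = 0.
Proof.
rewrite sum_nat_of_bool => /card_gt1P [i [k [ei ek ik]]].
apply: (prod_exp_eq0_pair (t1 := Some i) (t2 := Some k)) => //=.
by rewrite -(subnKC ei) -(subnKC ek) !exprD mulrACA vbar_cube_mul_cube // mul0r.
Qed.

Lemma prod_fac_eq0_Rdeg : (2 < (0 < e None) + \sum_t (1 < e (Some t)))%N -> prod_fac = 0.
Proof.
pose w o : nat := if o is Some t then (1 < e o)%N else (0 < e o)%N.
have wF o : Rdeg_ge (w o) (fac o ^+ e o).
  case: o => [t|] /=; rewrite /w; case: leqP => e_o //=; try exact: Rdeg_ge0.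
    exact: Rdeg_ge1_exp (Rdeg_ge1_vbar_sqr (j := t)) e_o.
  by apply: Rdeg_ge1_exp e_o; rewrite expr1; apply: Rdeg_ge1_Rbar.
move=> w_gt2; apply: Rdeg_ge3_eq0 (Rdeg_ge_le _ (Rdeg_ge_prod wF)).
by rewrite sum_option.
Qed.

End Exponents.

Lemma prodT_prod (s : seq (elT n)) : prodT s = \prod_(x <- s) (x : coh).
Proof. by elim: s => [|x s IH]; rewrite ?big_nil ?big_cons //= IH. Qed.

Lemma factorE (o : option I) : (factor o : coh) = fac o.
Proof. by case: o => [j|] //=; rewrite vbar.unlock. Qed.

Lemma prod_factor_eq0 (s : seq (option I)) : (0 < n)%N -> (n + 3 <= size s)%N ->
  \prod_(o <- s) (factor o : coh) = 0.
Proof.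
move=> n_gt0 size_s; rewrite prodr_count; under eq_bigr do rewrite factorE.
pose e o := count_mem o s; rewrite -/(\prod_o fac o ^+ e o).
have [eN | ] := leqP (e None) 1; last exact: prod_fac_eq0_Rbar.
have [eS | /forallPn [t]] := boolP [forall t, e (Some t) <= 3]%N; last first.
  by rewrite -ltnNge; apply: prod_fac_eq0_vbar.
have [C3 | ] := leqP (\sum_t (3 <= e (Some t)))%N 1; last exact: prod_fac_eq0_cubes.
have [C2 | ] := leqP ((0 < e None) + \sum_t (2 <= e (Some t)))%N 2; last first.
  exact: prod_fac_eq0_Rdeg.
have := sum_exponents_le eN (fun t => forallP eS t) C3 C2.
rewrite card_ord /e -size_count => size_le.
by move: (leq_trans size_s size_le); rewrite leq_add2r leqNgt ltn_predL n_gt0.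
Qed.

Lemma Vb_succ (j : I) : (Vb n j.+1 : coh) = vbar j.
Proof. by rewrite vbar.unlock /Vb (big_pred1 j) // => i; rewrite /= eqSS. Qed.

Lemma prod_Vb_iota :
  \prod_(i <- iota 3 (n - 3)) (Vb n i : coh) = \prod_(j : I | (2 <= j)%N) vbar j.
Proof.
rewrite -[iota 3 (n - 3)]/(index_iota (2 + 1) n) big_addn big_geq_mkord subn1.
by apply: eq_big => [i | i _]; rewrite ?addn1 ?Vb_succ.
Qed.

Lemma prod_Vb_neq0 : (3 <= n)%N ->
  prodT ([:: Vb n 1; Vb n 1; Vb n 1; Vb n 2; Vb n 2]
           ++ [seq Vb n i | i <- iota 3 (n - 3)]) != 0.
Proof.
move=> n_ge3.
have lt0 : (0 < n.-1)%N by case: n n_ge3 => [|[|[|]]].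
have lt1 : (1 < n.-1)%N by case: n n_ge3 => [|[|[|]]].
pose j0 : I := Ordinal lt0; pose j1 : I := Ordinal lt1.
rewrite prodT_prod big_cat big_map /= !big_cons big_nil mulr1 prod_Vb_iota.
rewrite (Vb_succ j0) (Vb_succ j1) -big_filter mulrC.
have -> : vbar j0 * (vbar j0 * (vbar j0 * (vbar j1 * vbar j1))) = vbar j0 ^+ 3 * vbar j1 ^+ 2.
  by rewrite !exprS expr0 !mulr1 !mulrA.
set s := [seq j <- _ | _].
have sW j : j \in s -> j \notin [set j0; j1].
  by rewrite mem_filter !inE -!val_eqE /= => /andP [j_ge2 _]; case: (val j) j_ge2 => [|[|]].
have sL j : j \in s -> j \notin [set j0] by move/sW; rewrite !inE negb_or => /andP [].
apply: right_slice_neq0 (right_slice_prod_vbar _ sW sL (right_slice_cube_sqr _)) => //.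
exact: filter_uniq (index_enum_uniq I).
Qed.

End ZeroDivisorCupLength.

Theorem mainTheorem17 (n : nat) (hn : (3 <= n)%N) :
  prodT ([:: Vb n 1; Vb n 1; Vb n 1; Vb n 2; Vb n 2]
           ++ [seq Vb n i | i <- iota 3 (n - 3)]) != 0
  /\ (forall s : seq (option 'I_(n.-1)),
        (n + 3 <= size s)%N -> prodT [seq @factor n o | o <- s] = 0).
Proof.
split; first exact: prod_Vb_neq0.
move=> s size_s; rewrite prodT_prod big_map.
by apply: prod_factor_eq0 size_s; apply: leq_trans hn.
Qed.
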